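(* Let $p$ be a prime, $k$ an integer with $3\le k\le p-1$, and $A\subseteq\mathbb{Z}/p\mathbb{Z}$ with $|A|\ge k+2$. Let \[ S_k(A)=\{a_1+a_2+k a_3 : a_1,a_2,a_3\in A \text{ pairwise distinct}\}. \] Then: (i) if $|A|\le (p+6)/3$, then $|S_k(A)|\ge 3|A|-6$; (ii) if $|A|=(p+7)/3$, then $|S_k(A)|\ge p-2$; (iii) if $|A|\ge (p+8)/3$, then $S_k(A)=\mathbb{Z}/p\mathbb{Z}$.
   Context: Here $k a_3$ denotes the $k$-fold multiple of $a_3$ in $\mathbb{Z}/p\mathbb{Z}$. *)

From HB Require Import structures.
From mathcomp Require Import all_boot all_order all_algebra.
Set Implicit Arguments. Unset Strict Implicit. Unset Printing Implicit Defensive.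
Import GRing.Theory.
Local Open Scope ring_scope.

Definition Sk (p k : nat) (A : {set 'F_p}) : {set 'F_p} :=
  [set x : 'F_p | [exists a1 in A, exists a2 in A, exists a3 in A,
     [&& a1 != a2, a1 != a3, a2 != a3 & x == a1 + a2 + a3 *+ k]]].

(* The proof is the coefficient form of the Combinatorial Nullstellensatz.
   For finite sets B1, B2, B3 of sizes T1+1, T2+1, T3+1 in a field, the grid
   sum of f weighted by the Lagrange weights 1 / prod_{b in B, b <> a} (a - b)
   kills every monomial of total degree at most T1+T2+T3 except
   x1^T1 x2^T2 x3^T3, whose value is 1 (this follows from Lagrange
   interpolation of X^e on the nodes of B).  If S_k(A) is contained in a set C
   with |C| = m = T1+T2+T3-3, and B1, B2, B3 are subsets of A, then
     (a1-a2)(a1-a3)(a2-a3) * prod_{c in C} (a1 + a2 + k a3 - c)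
   vanishes on B1 x B2 x B3, so its top coefficient is 0.  Expanding the
   trinomial power, that coefficient is
     m! / ((x+2)! (y+2)! (z+2)!) * k^z * W_{x,y,z}(k)   (T1,T2,T3 = x+2,y+2,z+2)
   for an explicit quadratic factor W (wpoly).  Hence W_{x,y,z}(k) = 0 in
   F_p whenever m < p.  Suitable choices of (x, y, z) make W nonzero, which
   gives the lower bound 3|A| - 6 (parts (i) and (ii)) and, with C the
   complement of a missing point, the covering statement (iii). *)
From HB Require Import structures.
From mathcomp Require Import all_boot all_order all_algebra.
From mathcomp Require Import zify ring.
Set Implicit Arguments. Unset Strict Implicit. Unset Printing Implicit Defensive.
Import GRing.Theory.
Local Open Scope ring_scope.

Section LagrangeMoments.
Variable F : finFieldType.
Implicit Types (B : {set F}) (a : F).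

Definition node_poly B a : {poly F} := \prod_(b in B :\ a) ('X - b%:P).

Definition lagrange_weight B a : F := (\prod_(b in B :\ a) (a - b))^-1.

Definition moment B (e : nat) : F := \sum_(a in B) a ^+ e * lagrange_weight B a.

Lemma size_node_poly B a : a \in B -> size (node_poly B a) = #|B|.
Proof.
by move=> aB; rewrite /node_poly -big_enum size_prod_XsubC -cardE (cardsD1 a B) aB.
Qed.

Lemma node_poly_monic B a : node_poly B a \is monic.
Proof. by rewrite /node_poly -big_enum monic_prod_XsubC. Qed.

Lemma horner_node_poly B a c : c \in B ->
  (node_poly B a).[c] = if c == a then (lagrange_weight B a)^-1 else 0.
Proof.
move=> cB; rewrite /node_poly horner_prod; case: eqP => [->|ca].
  by rewrite invrK; apply: eq_bigr => b _; rewrite hornerXsubC.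
rewrite (bigD1 c) /=; last by rewrite !inE cB andbT; apply/eqP.
by rewrite hornerXsubC subrr mul0r.
Qed.

Lemma lagrange_weight_neq0 B a : lagrange_weight B a != 0.
Proof.
rewrite invr_eq0 prodf_seq_neq0; apply/allP => b _; apply/implyP.
by rewrite !inE subr_eq0 eq_sym => /andP[].
Qed.

Lemma lagrange_interpolation B (q : {poly F}) : (size q <= #|B|)%N ->
  q = \sum_(a in B) (q.[a] * lagrange_weight B a) *: node_poly B a.
Proof.
move=> sq; apply/eqP; rewrite eq_sym -subr_eq0; apply/eqP.
apply: (@roots_geq_poly_eq0 _ _ (enum B)); last 2 first.
- exact: enum_uniq.
- rewrite -cardE; apply: leq_trans (size_polyD _ _) _.
  rewrite geq_max size_polyN sq andbT.
  apply: (big_ind (fun r : {poly F} => size r <= #|B|)%N) => //.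
  + by rewrite size_poly0.
  + by move=> r s hr hs; apply: leq_trans (size_polyD _ _) _; rewrite geq_max hr.
  + by move=> a aB; apply: leq_trans (size_scale_leq _ _) _; rewrite size_node_poly.
apply/allP => c; rewrite mem_enum => cB.
rewrite /root hornerD hornerN horner_sum (bigD1 c) //= big1 ?addr0.
  by rewrite hornerZ horner_node_poly // eqxx -mulrA mulfV ?lagrange_weight_neq0 // mulr1 subrr.
by move=> a /andP[aB ca]; rewrite hornerZ horner_node_poly // eq_sym (negbTE ca) mulr0.
Qed.

(* Comparing coefficients of X^(|B|-1) in the interpolation of X^e: the
   moments of order below |B| vanish except the top one, which is 1. *)
Lemma moment_small B e : (e < #|B|)%N -> moment B e = (e == #|B|.-1)%:R.
Proof.
move=> he; have sX : (size ('X^e : {poly F}) <= #|B|)%N by rewrite size_polyXn.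
have := congr1 (fun r : {poly F} => r`_#|B|.-1) (lagrange_interpolation sX).
rewrite /= coefXn coef_sum eq_sym => ->; rewrite /moment; apply: eq_bigr => a aB.
have := node_poly_monic B a; rewrite monicE lead_coefE size_node_poly // => /eqP lc.
by rewrite coefZ lc mulr1 hornerXn.
Qed.

Lemma moment_lt B e : (e < #|B|.-1)%N -> moment B e = 0.
Proof. by move=> he; rewrite moment_small ?(ltn_eqF he) //; lia. Qed.

Lemma moment_top B : (0 < #|B|)%N -> moment B #|B|.-1 = 1.
Proof. by move=> hB; rewrite moment_small ?eqxx //; lia. Qed.

End LagrangeMoments.

Section GridSum.
Variable F : finFieldType.
Variables (B1 B2 B3 : {set F}) (T1 T2 T3 : nat).
Hypotheses (hB1 : #|B1| = T1.+1) (hB2 : #|B2| = T2.+1) (hB3 : #|B3| = T3.+1).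

Definition grid_sum (f : F -> F -> F -> F) : F :=
  \sum_(a1 in B1) \sum_(a2 in B2) \sum_(a3 in B3)
     (lagrange_weight B1 a1 * lagrange_weight B2 a2 * lagrange_weight B3 a3) * f a1 a2 a3.

Lemma eq_grid_sum f g : (forall a1 a2 a3, f a1 a2 a3 = g a1 a2 a3) ->
  grid_sum f = grid_sum g.
Proof.
by move=> fg; apply: eq_bigr => a1 _; apply: eq_bigr => a2 _; apply: eq_bigr => a3 _; rewrite fg.
Qed.

Lemma grid_sum_sum (I : Type) (r : seq I) (g : I -> F -> F -> F -> F) :
  grid_sum (fun a1 a2 a3 => \sum_(i <- r) g i a1 a2 a3) = \sum_(i <- r) grid_sum (g i).
Proof.
rewrite /grid_sum.
under eq_bigr do under eq_bigr do under eq_bigr do rewrite mulr_sumr.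
under eq_bigr do under eq_bigr do rewrite exchange_big.
under eq_bigr do rewrite exchange_big.
by rewrite exchange_big.
Qed.

Lemma grid_sumZ c f : grid_sum (fun a1 a2 a3 => c * f a1 a2 a3) = c * grid_sum f.
Proof.
rewrite /grid_sum mulr_sumr; apply: eq_bigr => a1 _; rewrite mulr_sumr.
apply: eq_bigr => a2 _; rewrite mulr_sumr; apply: eq_bigr => a3 _.
by rewrite mulrCA.
Qed.

Lemma grid_sumD f g :
  grid_sum (fun a1 a2 a3 => f a1 a2 a3 + g a1 a2 a3) = grid_sum f + grid_sum g.
Proof.
rewrite /grid_sum -big_split; apply: eq_bigr => a1 _; rewrite -big_split.
apply: eq_bigr => a2 _; rewrite -big_split; apply: eq_bigr => a3 _.
by rewrite mulrDr.
Qed.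

Lemma grid_sumN f : grid_sum (fun a1 a2 a3 => - f a1 a2 a3) = - grid_sum f.
Proof.
rewrite -mulN1r -grid_sumZ; apply: eq_grid_sum => a1 a2 a3.
by rewrite mulN1r.
Qed.

Lemma grid_sum_monomial e1 e2 e3 : (e1 + e2 + e3 <= T1 + T2 + T3)%N ->
  grid_sum (fun a1 a2 a3 => a1 ^+ e1 * a2 ^+ e2 * a3 ^+ e3) =
  [&& e1 == T1, e2 == T2 & e3 == T3]%:R.
Proof.
move=> he.
have -> : grid_sum (fun a1 a2 a3 => a1 ^+ e1 * a2 ^+ e2 * a3 ^+ e3) =
    moment B1 e1 * moment B2 e2 * moment B3 e3.
  rewrite /grid_sum /moment [in RHS]mulr_suml [in RHS]mulr_suml.
  apply: eq_bigr => a1 _; rewrite -mulrA big_distrlr mulr_sumr.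
  apply: eq_bigr => a2 _; rewrite mulr_sumr; apply: eq_bigr => a3 _.
  by rewrite /=; ring.
have m1 e : (e < T1)%N -> moment B1 e = 0 by move=> h; rewrite moment_lt // hB1.
have m2 e : (e < T2)%N -> moment B2 e = 0 by move=> h; rewrite moment_lt // hB2.
have m3 e : (e < T3)%N -> moment B3 e = 0 by move=> h; rewrite moment_lt // hB3.
have [h1|h1] := ltnP e1 T1; first by rewrite m1 // !mul0r (ltn_eqF h1).
have [h2|h2] := ltnP e2 T2; first by rewrite m2 // mulr0 mul0r (ltn_eqF h2) andbF.
have [h3|h3] := ltnP e3 T3; first by rewrite m3 // mulr0 (ltn_eqF h3) !andbF.
have [-> -> ->] : [/\ e1 = T1, e2 = T2 & e3 = T3] by split; lia.
have t1 : moment B1 T1 = 1 by rewrite -[T1]/(T1.+1.-1) -hB1 moment_top // hB1.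
have t2 : moment B2 T2 = 1 by rewrite -[T2]/(T2.+1.-1) -hB2 moment_top // hB2.
have t3 : moment B3 T3 = 1 by rewrite -[T3]/(T3.+1.-1) -hB3 moment_top // hB3.
by rewrite t1 t2 t3 !eqxx !mulr1.
Qed.

End GridSum.

Section Collapse.
Variable R : nzRingType.
Variables T1 T2 T3 : nat.

(* Whether x1^(j-i-l+v1) x2^(l+v2) x3^(i+v3) is x1^T1 x2^T2 x3^T3. *)
Definition target_ind (v1 v2 v3 j i l : nat) : R :=
  [&& (j - i - l + v1 == T1)%N, (l + v2 == T2)%N & (i + v3 == T3)%N]%:R.

(* At most one pair (i, l) hits the target, and only in total degree
   T1 + T2 + T3. *)
Lemma sum_target_ind (f : nat -> nat -> R) j v1 v2 v3 :
  (v1 <= T1)%N -> (v2 <= T2)%N -> (v3 <= T3)%N ->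
  \sum_(i < j.+1) \sum_(l < (j - i).+1) f i l * target_ind v1 v2 v3 j i l =
  if (j + v1 + v2 + v3 == T1 + T2 + T3)%N then f (T3 - v3)%N (T2 - v2)%N else 0.
Proof.
move=> h1 h2 h3; case: ifP => hj; last first.
  apply: big1 => i _; apply: big1 => l _; rewrite /target_ind.
  case: and3P => [[/eqP e1 /eqP e2 /eqP e3]|]; last by rewrite mulr0.
  have := ltn_ord i; have := ltn_ord l; move: hj => /negbT/eqP; lia.
have hi : (T3 - v3 < j.+1)%N by lia.
rewrite (bigD1 (Ordinal hi)) //= [X in _ + X]big1 ?addr0; last first.
  move=> i /eqP hne; apply: big1 => l _; rewrite /target_ind.
  case: (i + v3 == T3)%N / eqP => e; last by rewrite !andbF mulr0.
  by exfalso; apply: hne; apply: val_inj => /=; lia.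
have hl : (T2 - v2 < (j - (T3 - v3)).+1)%N by lia.
rewrite (bigD1 (Ordinal hl)) //= [X in _ + X]big1 ?addr0; last first.
  move=> l /eqP hne; rewrite /target_ind.
  case: (l + v2 == T2)%N / eqP => e; last by rewrite andbF /= mulr0.
  by exfalso; apply: hne; apply: val_inj => /=; lia.
rewrite /target_ind.
have -> : [&& (j - (T3 - v3) - (T2 - v2) + v1 == T1)%N, (T2 - v2 + v2 == T2)%N
   & (T3 - v3 + v3 == T3)%N] = true by apply/and3P; split; apply/eqP; lia.
by rewrite mulr1.
Qed.

(* The six target indicators coming from the Vandermonde product. *)
Definition vdm_ind j i l : R :=
  target_ind 2 1 0 j i l - target_ind 2 0 1 j i l - target_ind 1 2 0 j i l
  + target_ind 1 0 2 j i l + target_ind 0 2 1 j i l - target_ind 0 1 2 j i l.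

Lemma sum_vdm_ind (f : nat -> nat -> R) j :
  (2 <= T1)%N -> (2 <= T2)%N -> (2 <= T3)%N ->
  \sum_(i < j.+1) \sum_(l < (j - i).+1) f i l * vdm_ind j i l =
  if (j + 3 == T1 + T2 + T3)%N then
    f T3 (T2 - 1)%N - f (T3 - 1)%N T2 - f T3 (T2 - 2)%N
    + f (T3 - 2)%N T2 + f (T3 - 1)%N (T2 - 2)%N - f (T3 - 2)%N (T2 - 1)%N
  else 0.
Proof.
move=> h1 h2 h3; rewrite /vdm_ind.
under eq_bigr do under eq_bigr do rewrite !mulrDr !mulrN.
under eq_bigr do rewrite !big_split /= !sumrN.
rewrite !big_split /= !sumrN !sum_target_ind //; try lia.
rewrite !addn0 -!addnA /= !subn0.
by case: ifP => _; rewrite ?subr0 ?addr0 ?oppr0.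
Qed.
End Collapse.

Lemma trinomial (R : comNzRingType) (a b c : R) j : (a + b + c) ^+ j =
  \sum_(i < j.+1) \sum_(l < (j - i).+1)
     ('C(j, i) * 'C(j - i, l))%:R * (a ^+ (j - i - l) * b ^+ l * c ^+ i).
Proof.
rewrite exprDn; apply: eq_bigr => i _.
rewrite exprDn -mulr_natr mulr_suml mulr_suml; apply: eq_bigr => l _.
rewrite -mulr_natr natrM.
move: (a ^+ _) (b ^+ _) (c ^+ _) ('C(j, i)%:R) ('C(j - i, l)%:R) => x y z u v; ring.
Qed.

Section TopCoefficient.
Variable F : finFieldType.
Variables (B1 B2 B3 : {set F}) (T1 T2 T3 : nat).
Hypotheses (hB1 : #|B1| = T1.+1) (hB2 : #|B2| = T2.+1) (hB3 : #|B3| = T3.+1).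

Definition vdm (a1 a2 a3 : F) : F := (a1 - a2) * (a1 - a3) * (a2 - a3).

Lemma grid_sum_vdm_monomial j i l :
  (j + 3 <= T1 + T2 + T3)%N -> (i <= j)%N -> (l <= j - i)%N ->
  grid_sum B1 B2 B3 (fun a1 a2 a3 => vdm a1 a2 a3 * (a1 ^+ (j - i - l) * a2 ^+ l * a3 ^+ i))
  = vdm_ind F T1 T2 T3 j i l.
Proof.
move=> hj hi hl; set e1 := (j - i - l)%N.
pose m u1 u2 u3 := grid_sum B1 B2 B3
  (fun a1 a2 a3 => a1 ^+ (e1 + u1) * a2 ^+ (l + u2) * a3 ^+ (i + u3)).
have -> : grid_sum B1 B2 B3 (fun a1 a2 a3 => vdm a1 a2 a3 * (a1 ^+ e1 * a2 ^+ l * a3 ^+ i))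
    = m 2 1 0 - m 2 0 1 - m 1 2 0 + m 1 0 2 + m 0 2 1 - m 0 1 2.
  rewrite /m -!grid_sumN -!grid_sumD; apply: eq_grid_sum => a1 a2 a3.
  by rewrite /vdm !exprD !expr0 !expr1; ring.
by rewrite /m /vdm_ind /target_ind !(grid_sum_monomial hB1 hB2 hB3) //; lia.
Qed.

(* Coefficient of x1^(m-i-l) x2^l x3^i in (x1 + x2 + k x3)^m. *)
Definition tri_coef (k : F) m i l : F := ('C(m, i) * 'C(m - i, l))%:R * k ^+ i.

(* Coefficient of x1^T1 x2^T2 x3^T3 in vdm * (x1 + x2 + k x3)^m. *)
Definition top_coef (k : F) m : F :=
    tri_coef k m T3 (T2 - 1) - tri_coef k m (T3 - 1) T2 - tri_coef k m T3 (T2 - 2)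
  + tri_coef k m (T3 - 2) T2 + tri_coef k m (T3 - 1) (T2 - 2)
  - tri_coef k m (T3 - 2) (T2 - 1).

(* Only the leading term of P reaches degree T1 + T2 + T3 = m + 3, so the
   grid sum of vdm * P(x1 + x2 + k x3) is the top coefficient. *)
Lemma grid_sum_vdm_poly (k : F) (P : {poly F}) m :
  (2 <= T1)%N -> (2 <= T2)%N -> (2 <= T3)%N -> (T1 + T2 + T3 = m + 3)%N ->
  P \is monic -> size P = m.+1 ->
  grid_sum B1 B2 B3 (fun a1 a2 a3 => vdm a1 a2 a3 * P.[a1 + a2 + k * a3]) = top_coef k m.
Proof.
move=> h1 h2 h3 hT monP sP.
have lP : P`_m = 1 by move: monP; rewrite monicE lead_coefE sP => /eqP.
pose term j i l a1 a2 a3 :=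
  (P`_j * tri_coef k j i l) * (vdm a1 a2 a3 * (a1 ^+ (j - i - l) * a2 ^+ l * a3 ^+ i)).
rewrite (@eq_grid_sum F B1 B2 B3 _ (fun a1 a2 a3 => \sum_(j < size P) \sum_(i < j.+1)
    \sum_(l < (j - i).+1) term j i l a1 a2 a3)); last first.
  move=> a1 a2 a3; rewrite horner_coef mulr_sumr; apply: eq_bigr => j _.
  rewrite trinomial !mulr_sumr; apply: eq_bigr => i _.
  rewrite !mulr_sumr; apply: eq_bigr => l _.
  by rewrite /term /tri_coef exprMn; ring.
rewrite grid_sum_sum.
under eq_bigr do rewrite grid_sum_sum.
under eq_bigr do under eq_bigr do rewrite grid_sum_sum.
have collapse_j (j : 'I_(size P)) :
  \sum_(i < j.+1) \sum_(l < (j - i).+1) grid_sum B1 B2 B3 (term j i l) =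
  if (j + 3 == T1 + T2 + T3)%N then P`_j * top_coef k j else 0.
  rewrite /top_coef !(mulrDr, mulrN) -(sum_vdm_ind (fun i l => P`_j * tri_coef k j i l)) //.
  apply: eq_bigr => i _; apply: eq_bigr => l _.
  rewrite grid_sumZ grid_sum_vdm_monomial //.
  - by have := ltn_ord j; rewrite {2}sP; lia.
  - by have := ltn_ord i; lia.
  - by have := ltn_ord l; lia.
rewrite (eq_bigr _ (fun j _ => collapse_j j)) sP big_ord_recr /= big1; last first.
  by move=> j _; have := ltn_ord j; rewrite hT; case: eqP => //; lia.
by rewrite add0r hT eqxx lP mul1r.
Qed.

End TopCoefficient.

Lemma multinomial_fact m i l : (i + l <= m)%N ->
  ('C(m, i) * 'C(m - i, l) * (i`! * l`! * (m - i - l)`!))%N = m`!.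
Proof.
move=> h; have hi : (i <= m)%N by lia.
have hl : (l <= m - i)%N by lia.
by rewrite -(bin_fact hi) -(bin_fact hl); ring.
Qed.

Definition wpoly (F : fieldType) x y z (c : F) : F :=
  (x.+2%:R - y.+2%:R) * (x.+2%:R * y.+2%:R * c ^+ 2
     - z.+2%:R * (x.+2%:R + y.+2%:R - 1) * c + z.+2%:R * (z.+2%:R - 1)).

Section ClosedForm.
Variable F : finFieldType.
Variables x y z : nat.
Let m := (x + y + z + 3)%N.
Hypothesis nat_neq0 : forall n, (0 < n <= m)%N -> (n%:R : F) != 0.

Lemma fact_neq0 n : (n <= m)%N -> (n`!%:R : F) != 0.
Proof.
elim: n => [|n IH] h; first by rewrite fact0 oner_eq0.
by rewrite factS natrM mulf_neq0 ?IH ?nat_neq0 //; lia.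
Qed.

Lemma tri_coefE (k : F) i l : (i + l <= m)%N ->
  tri_coef k m i l = m`!%:R / (i`!%:R * l`!%:R * (m - i - l)`!%:R) * k ^+ i.
Proof.
move=> h; rewrite /tri_coef; congr (_ * _).
have hd : (i`!%:R * l`!%:R * (m - i - l)`!%:R : F) != 0.
  by rewrite !mulf_neq0 // fact_neq0 //; lia.
by apply: (mulIf hd); rewrite mulfVK // -!natrM multinomial_fact.
Qed.

Lemma top_coefE (k : F) :
  top_coef y.+2 z.+2 k m =
  m`!%:R / (x.+2`!%:R * y.+2`!%:R * z.+2`!%:R) * k ^+ z * wpoly x y z k.
Proof.
rewrite /top_coef /wpoly.
have -> : (y.+2 - 1 = y.+1)%N by lia.
have -> : (y.+2 - 2 = y)%N by lia.
have -> : (z.+2 - 1 = z.+1)%N by lia.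
have -> : (z.+2 - 2 = z)%N by lia.
rewrite !tri_coefE; try (rewrite /m; lia).
have -> : (m - z.+2 - y.+1 = x)%N by rewrite /m; lia.
have -> : (m - z.+1 - y.+2 = x)%N by rewrite /m; lia.
have -> : (m - z.+2 - y = x.+1)%N by rewrite /m; lia.
have -> : (m - z - y.+2 = x.+1)%N by rewrite /m; lia.
have -> : (m - z.+1 - y = x.+2)%N by rewrite /m; lia.
have -> : (m - z - y.+1 = x.+2)%N by rewrite /m; lia.
have hf n : (n <= m)%N -> (n`!%:R : F) != 0 := @fact_neq0 n.
have hn n : (0 < n <= m)%N -> (n%:R : F) != 0 := @nat_neq0 n.
have hx := hf x; have hy := hf y; have hz := hf z.
have hx1 := hn x.+1; have hx2 := hn x.+2; have hy1 := hn y.+1.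
have hy2 := hn y.+2; have hz1 := hn z.+1; have hz2 := hn z.+2.
rewrite !factS !natrM !exprS.
move: hx hy hz; move: (x`!%:R : F) (y`!%:R : F) (z`!%:R : F) (m`!%:R : F).
move=> X Y Z M hx hy hz.
have e1 n : (1 + n%:R : F) = n.+1%:R by rewrite addrC natr1.
have e2 n : (2 + n%:R : F) = n.+2%:R by rewrite -natrD add2n.
field; rewrite !e1 !e2 hx ?hy ?hz ?hx1 ?hx2 ?hy1 ?hy2 ?hz1 ?hz2 //; rewrite /m; lia.
Qed.
End ClosedForm.

Lemma subset_of_card (T : finType) (A : {set T}) n : (n <= #|A|)%N ->
  exists2 B : {set T}, B \subset A & #|B| = n.
Proof.
move=> h; exists [set x in take n (enum A)].
  by apply/subsetP => x; rewrite inE => /mem_take; rewrite mem_enum.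
rewrite cardsE; have /card_uniqP -> := take_uniq n (enum_uniq (mem A)).
by rewrite size_takel // -cardE.
Qed.

Lemma superset_of_card (T : finType) (S : {set T}) n :
  (#|S| <= n <= #|T|)%N -> exists2 C : {set T}, S \subset C & #|C| = n.
Proof.
move=> /andP[h1 h2]; have : (n - #|S| <= #|~: S|)%N by have := cardsC S; lia.
case/subset_of_card => B sB cB; exists (S :|: B); first exact: subsetUl.
have SB0 : S :&: B = set0.
  by apply/setP => u; rewrite !inE; apply/andP => -[uS /(subsetP sB)]; rewrite inE uS.
by rewrite cardsU SB0 cards0 cB; lia.
Qed.

Section Vanishing.
Variable F : finFieldType.
Variables (k : F) (A C : {set F}).
Hypothesis sumset_sub : forall a1 a2 a3, a1 \in A -> a2 \in A -> a3 \in A ->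
  a1 != a2 -> a1 != a3 -> a2 != a3 -> a1 + a2 + k * a3 \in C.

Lemma grid_sum_vdm_vanish (B1 B2 B3 : {set F}) :
  B1 \subset A -> B2 \subset A -> B3 \subset A ->
  grid_sum B1 B2 B3 (fun a1 a2 a3 =>
    vdm a1 a2 a3 * (\prod_(c in C) ('X - c%:P)).[a1 + a2 + k * a3]) = 0.
Proof.
move=> /subsetP s1 /subsetP s2 /subsetP s3.
apply: big1 => a1 /s1 a1A; apply: big1 => a2 /s2 a2A; apply: big1 => a3 /s3 a3A.
have [->|n12] := eqVneq a1 a2; first by rewrite /vdm subrr !(mul0r, mulr0).
have [->|n13] := eqVneq a1 a3; first by rewrite /vdm subrr !(mul0r, mulr0).
have [->|n23] := eqVneq a2 a3; first by rewrite /vdm subrr !(mul0r, mulr0).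
have := sumset_sub a1A a2A a3A n12 n13 n23.
rewrite -mem_enum -root_prod_XsubC big_enum => /rootP ->.
by rewrite !mulr0.
Qed.

(* Choose Bi in A of sizes x+3, y+3, z+3 and compare the closed form of the
   top coefficient with the vanishing grid sum. *)
Lemma wpoly_vanish x y z :
  (x.+3 <= #|A|)%N -> (y.+3 <= #|A|)%N -> (z.+3 <= #|A|)%N ->
  #|C| = (x + y + z + 3)%N ->
  (forall n, (0 < n <= x + y + z + 3)%N -> (n%:R : F) != 0) ->
  k ^+ z * wpoly x y z k = 0.
Proof.
move=> hx hy hz hC nat_neq0.
have [B1 s1 c1] := subset_of_card hx.
have [B2 s2 c2] := subset_of_card hy.
have [B3 s3 c3] := subset_of_card hz.
have monP : \prod_(c in C) ('X - c%:P) \is monic by rewrite -big_enum monic_prod_XsubC.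
have sP : size (\prod_(c in C) ('X - c%:P)) = #|C|.+1.
  by rewrite -big_enum size_prod_XsubC cardE.
have := grid_sum_vdm_poly c1 c2 c3 k isT isT isT _ monP sP.
rewrite grid_sum_vdm_vanish // hC top_coefE // => /(_ ltac:(lia)) /esym /eqP.
rewrite -mulrA mulf_eq0 => /orP[|/eqP //].
have fact_ne0 n : (n <= x + y + z + 3)%N -> (n`!%:R : F) != 0 by apply: fact_neq0.
by rewrite mulf_eq0 invr_eq0 !mulf_eq0 !(negbTE (fact_ne0 _ _)) //; lia.
Qed.
End Vanishing.

Section PrimeField.
Variable p : nat.
Hypothesis p_prime : prime p.

Lemma natFp_neq0 n : (0 < n < p)%N -> (n%:R : 'F_p) != 0.
Proof.
by move=> /andP[n0 np]; rewrite -(dvdn_pcharf (pchar_Fp p_prime)) gtnNdvd.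
Qed.

Lemma natFp_sub_neq0 a b : (a < p)%N -> (b < p)%N -> a != b ->
  (a%:R - b%:R : 'F_p) != 0.
Proof.
move=> ap bp; apply: contra; rewrite subr_eq0 => /eqP /(congr1 (fun u : 'F_p => u : nat)).
by rewrite !val_Fp_nat // !modn_small // => ->.
Qed.

Lemma natFp_pred_neq0 n : (1 < n <= p)%N -> (n%:R - 1 : 'F_p) != 0.
Proof. by move=> hn; rewrite -[1]/(1%:R) -natrB ?natFp_neq0 //; lia. Qed.

(* The exceptional prime p = 7, checked by computation. *)
Lemma wpoly_F7 k : (3 <= k <= 6)%N -> wpoly 0 1 2 (k%:R : 'F_7) != 0.
Proof. by case/andP; case: k => [|[|[|[|[|[|[|]]]]]]]. Qed.

(* The case 2k + 1 = p: W_{0,k-2,k-1}(k) = -(k-2) k^2 (k-1). *)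
Lemma wpoly_half_neq0 k : (2 < k < p)%N ->
  wpoly 0 (k - 2) (k - 1) (k%:R : 'F_p) != 0.
Proof.
move=> hk; have [y kE] : exists y, k = y.+2 by exists (k - 2)%N; lia.
rewrite kE !subSS !subn0.
have -> : wpoly 0 y y.+1 (y.+2%:R : 'F_p) = - (y%:R * y.+2%:R ^+ 2 * y.+1%:R).
  by rewrite /wpoly; ring.
by rewrite oppr_eq0 !mulf_neq0 ?expf_neq0 // natFp_neq0 //; lia.
Qed.

(* Diagonal choice z = x: W = (x-y)(x+2)(k-1)((y+2)k-(x+1)), and
   2((y+2)k - (x+1)) = (y+2)(2k+1) - p. *)
Lemma wpoly_diag_neq0 x y k : (2 * x + y + 4)%N = p -> x != y ->
  (1 < k < p)%N -> (2 * k + 1)%N != p -> wpoly x y x (k%:R : 'F_p) != 0.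
Proof.
move=> pE xy /andP[k1 kp] pk.
have -> : wpoly x y x (k%:R : 'F_p) =
    (x.+2%:R - y.+2%:R) * x.+2%:R * (k%:R - 1) * (y.+2%:R * k%:R - x.+1%:R).
  by rewrite /wpoly; ring.
rewrite !mulf_neq0 ?natFp_pred_neq0 ?natFp_sub_neq0 ?natFp_neq0 //; try lia.
have pk0 : ((2 * k + 1)%:R : 'F_p) != 0.
  rewrite -(dvdn_pcharf (pchar_Fp p_prime)); apply: contra pk => /dvdnP[q qE].
  have q1 : q = 1%N by move: qE; case: q => [|[|q]] //; rewrite ?mulSn; lia.
  by rewrite qE q1 mul1n.
have : 2 * (y.+2%:R * k%:R - x.+1%:R) = y.+2%:R * (2 * k + 1)%:R - p%:R :> 'F_p.
  by rewrite -pE; ring.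
rewrite pchar_Fp_0 // subr0; apply: contra_eq_neq => ->.
by rewrite mulr0 eq_sym mulf_neq0 // natFp_neq0 //; lia.
Qed.

End PrimeField.

Section RestrictedSumset.
Variables (p k : nat) (A : {set 'F_p}).
Hypotheses (p_prime : prime p) (k_bounds : (3 <= k <= p - 1)%N).

Let k_Fp_neq0 : (k%:R : 'F_p) != 0.
Proof. by apply: natFp_neq0; lia. Qed.

(* Restricted sums lie in S_k(A) (the scalar k acts as k%:R). *)
Lemma mem_Sk a1 a2 a3 : a1 \in A -> a2 \in A -> a3 \in A ->
  a1 != a2 -> a1 != a3 -> a2 != a3 -> a1 + a2 + k%:R * a3 \in Sk k A.
Proof.
move=> a1A a2A a3A n12 n13 n23; rewrite inE.
apply/existsP; exists a1; rewrite a1A /=; apply/existsP; exists a2; rewrite a2A /=.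
by apply/existsP; exists a3; rewrite a3A n12 n13 n23 /= mulr_natl.
Qed.

Lemma Sk_cover_wpoly (C : {set 'F_p}) x y z : Sk k A \subset C ->
  #|C| = (x + y + z + 3)%N -> (x + y + z + 3 < p)%N ->
  (x.+3 <= #|A|)%N -> (y.+3 <= #|A|)%N -> (z.+3 <= #|A|)%N ->
  wpoly x y z (k%:R : 'F_p) = 0.
Proof.
move=> /subsetP sC hC hp hx hy hz.
have sumset_sub a1 a2 a3 : a1 \in A -> a2 \in A -> a3 \in A ->
    a1 != a2 -> a1 != a3 -> a2 != a3 -> a1 + a2 + k%:R * a3 \in C.
  by move=> *; apply: sC; apply: mem_Sk.
have nat_neq0 n : (0 < n <= x + y + z + 3)%N -> (n%:R : 'F_p) != 0.
  by move=> hn; apply: natFp_neq0; lia.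
move/eqP: (wpoly_vanish sumset_sub hx hy hz hC nat_neq0).
by rewrite mulf_eq0 expf_eq0 (negbTE k_Fp_neq0) andbF => /eqP.
Qed.

(* With (x, y, z) = (y+1, y, y+1), W = (y+3)(y+2)(k-1)^2 is nonzero, so no set
   of size 3y + 5 < p covers S_k(A). *)
Lemma Sk_lower_bound y : (y + 4 <= #|A|)%N -> (3 * y + 5 < p)%N ->
  (3 * y + 6 <= #|Sk k A|)%N.
Proof.
move=> hA hp; rewrite leqNgt; apply/negP => hS.
have [C sC hC] : exists2 C : {set 'F_p}, Sk k A \subset C & #|C| = (3 * y + 5)%N.
  by apply: superset_of_card; rewrite card_Fp //; lia.
have := Sk_cover_wpoly (x := y.+1) (y := y) (z := y.+1) sC.
have -> : wpoly y.+1 y y.+1 (k%:R : 'F_p) = y.+3%:R * y.+2%:R * (k%:R - 1) ^+ 2.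
  by rewrite /wpoly; ring.
move/(_ ltac:(lia) ltac:(lia) ltac:(lia) ltac:(lia) ltac:(lia))/eqP; apply/negP.
by rewrite !mulf_neq0 ?expf_neq0 ?natFp_pred_neq0 ?natFp_neq0 //; lia.
Qed.

(* A point missed by S_k(A) gives a cover of size p - 1. *)
Lemma Sk_avoid_wpoly w x y z : w \notin Sk k A -> (x + y + z + 4)%N = p ->
  (x.+3 <= #|A|)%N -> (y.+3 <= #|A|)%N -> (z.+3 <= #|A|)%N ->
  wpoly x y z (k%:R : 'F_p) = 0.
Proof.
move=> wS pE; apply: (@Sk_cover_wpoly [set~ w]); last by lia.
- by apply/subsetP => v vS; rewrite !inE; apply: contraNneq wS => <-.
- by rewrite cardsC1 card_Fp //; lia.
Qed.

(* Part (iii): choose (x, y, z) with x + y + z + 4 = p and W nonzero; the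
   choice depends on whether p = 7, 2k + 1 = p, or neither. *)
Lemma Sk_full : (k + 2 <= #|A|)%N -> (p + 8 <= 3 * #|A|)%N -> Sk k A = [set: 'F_p].
Proof.
move=> hkA hA; apply/setP => w; rewrite in_setT; apply/negPn/negP => wS.
have vanish := Sk_avoid_wpoly wS.
have p_odd : odd p by case: (even_prime p_prime) => // p2; lia.
have [p7 | p_ne7] := eqVneq p 7.
  by subst p; move: (wpoly_F7 (k := k)); rewrite vanish ?eqxx //; lia.
have [pk | pk] := eqVneq (2 * k + 1)%N p.
  by move: (wpoly_half_neq0 p_prime (k := k)); rewrite vanish ?eqxx //; lia.
have diag x y : (2 * x + y + 4)%N = p -> x != y ->
    (x.+3 <= #|A|)%N -> (y.+3 <= #|A|)%N -> False.
  move=> pE xy hx hy; move: (wpoly_diag_neq0 p_prime pE xy (k := k)).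
  by rewrite vanish ?eqxx //; lia.
have [small | big] := leqP (2 * #|A| - 2) p.
  by apply: (diag (#|A| - 3)%N (p + 2 - 2 * #|A|)%N); lia.
have := odd_double_half p; rewrite p_odd -muln2 => pE.
by apply: (diag (p./2 - 2)%N 1%N); lia.
Qed.

End RestrictedSumset.

Local Close Scope ring_scope.

Theorem mainTheorem9 (p k : nat) (A : {set 'F_p}) :
  prime p -> 3 <= k <= p - 1 -> k + 2 <= #|A| ->
  [/\ (3 * #|A| <= p + 6 -> 3 * #|A| - 6 <= #|Sk k A|),
      (3 * #|A| = p + 7 -> p - 2 <= #|Sk k A|)
    & (p + 8 <= 3 * #|A| -> Sk k A = [set: 'F_p])].
Proof.
move=> p_prime k_bounds hA; split.
- move=> small; have := Sk_lower_bound (A := A) p_prime k_bounds (y := #|A| - 4).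
  by move/(_ ltac:(lia) ltac:(lia)); lia.
- move=> critical; have := Sk_lower_bound (A := A) p_prime k_bounds (y := #|A| - 5).
  by move/(_ ltac:(lia) ltac:(lia)); lia.
- exact: Sk_full.
Qed.
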